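(* Let $X,Y\in\mathbb{R}^{n\times n}$ and define $L:\mathbb{R}^{n\times n}\to\mathbb{R}^{n\times n}$ by $L(A)=XAY$. Then $L$ maps every minimally semipositive $n\times n$ matrix to a minimally semipositive matrix if and only if either both $X$ and $Y$ are inverse nonnegative, or both $-X$ and $-Y$ are inverse nonnegative.
   Context: For a matrix or vector, $\geq 0$ means entrywise nonnegative and $>0$ entrywise positive. A matrix $A\in\mathbb{R}^{m\times n}$ is semipositive if there exists $x\in\mathbb{R}^n$ with $x\geq 0$ and $Ax>0$. $A$ is minimally semipositive if it is semipositive and no submatrix obtained from $A$ by deleting one or more columns is semipositive. A square matrix $A$ is inverse nonnegative if $A$ is invertible and $A^{-1}\geq 0$. *)

From HB Require Import structures.
From mathcomp Require Import all_boot all_order all_algebra.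
Set Implicit Arguments. Unset Strict Implicit. Unset Printing Implicit Defensive.
Import Order.TTheory GRing.Theory Num.Theory.
Local Open Scope ring_scope.

Definition mx_nonneg (R : realFieldType) m n (A : 'M[R]_(m, n)) : Prop :=
  forall i j, 0 <= A i j.
Definition mx_pos (R : realFieldType) m n (A : 'M[R]_(m, n)) : Prop :=
  forall i j, 0 < A i j.

Definition semipositive (R : realFieldType) m n (A : 'M[R]_(m, n)) : Prop :=
  exists x : 'cV[R]_n, mx_nonneg x /\ mx_pos (A *m x).

(* submatrix of A keeping exactly the columns in S (in increasing order) *)
Definition col_submx (R : realFieldType) m n (A : 'M[R]_(m, n))
  (S : {set 'I_n}) : 'M[R]_(m, #|S|) :=
  colsub (fun k : 'I_#|S| => enum_val k) A.

Definition min_semipositive (R : realFieldType) m n (A : 'M[R]_(m, n)) : Prop :=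
  semipositive A /\
  forall S : {set 'I_n}, S != setT -> ~ semipositive (col_submx A S).

Definition inv_nonneg (R : realFieldType) n (A : 'M[R]_n) : Prop :=
  A \in unitmx /\ mx_nonneg (invmx A).

(** For a square matrix, minimal semipositivity is the same as inverse
    nonnegativity.  If [A^-1 >= 0], every nonnegative [w] with [A w > 0] is
    [A^-1 (A w)], hence has no zero entry, so no column can be dropped.
    Conversely, a minimal witness [x] has only positive entries; a direction
    [d] with a negative entry and [A d >= 0] (a kernel vector, or a column of
    [A^-1] with a negative entry) would move [x] to the boundary of the
    orthant while keeping [A x > 0], contradicting minimality.

    Hence [A |-> X A Y] preserves minimal semipositivity iff it preserves
    inverse nonnegativity.  Taking [A = 1] shows [X] and [Y] are invertible;
    taking [A = (1 + t E_bc)^-1] shows that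
    [Y^-1 X^-1 + t (Y^-1 e_b) (e_c^T X^-1)] is nonnegative for all [t > 0],
    so every product [Y^-1_ab X^-1_cd] is nonnegative, which forces [X^-1]
    and [Y^-1] to share a sign. *)
From HB Require Import structures.
From mathcomp Require Import all_boot all_order all_algebra.
From mathcomp Require Import ring lra.
Import Order.TTheory GRing.Theory Num.Theory.
Local Open Scope ring_scope.
Set Implicit Arguments. Unset Strict Implicit. Unset Printing Implicit Defensive.

Section MinimallySemipositive.
Variable R : realFieldType.

Lemma mx_nonneg_mul m n p (A : 'M[R]_(m, n)) (B : 'M[R]_(n, p)) :
  mx_nonneg A -> mx_nonneg B -> mx_nonneg (A *m B).
Proof. by move=> A0 B0 i j; rewrite mxE sumr_ge0 // => k _; rewrite mulr_ge0. Qed.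

Lemma unitmx_row_neq0 n (M : 'M[R]_n) a : M \in unitmx -> exists d, M a d != 0.
Proof.
move=> Mu; apply/existsP; apply: contraT; rewrite negb_exists => /forallP M_a0.
have := mulmxV Mu; move/matrixP/(_ a a); rewrite !mxE eqxx big1.
  by move/eqP; rewrite eq_sym oner_eq0.
by move=> d _; move/negPn/eqP: (M_a0 d) ->; rewrite mul0r.
Qed.

Lemma semipositive_col_submxP m n (A : 'M[R]_(m, n)) (S : {set 'I_n}) :
  semipositive (col_submx A S) <->
  exists w : 'cV[R]_n,
    [/\ mx_nonneg w, mx_pos (A *m w) & forall k, k \notin S -> w k 0 = 0].
Proof.
split.
  case=> x [x0 Ax0]; exists (\col_k \sum_(i | enum_val i == k) x i 0); split.
  - by move=> k j; rewrite mxE sumr_ge0.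
  - move=> r j; rewrite (ord1 j); have := Ax0 r 0; rewrite !mxE.
    under [X in _ -> _ < X]eq_bigr do rewrite mxE mulr_sumr big_mkcond /=.
    rewrite exchange_big /=; congr (_ < _); apply: eq_bigr => i _.
    rewrite (bigD1 (enum_val i)) //= eqxx big1 ?addr0 ?mxE //.
    by move=> k /negPf; rewrite eq_sym => ->.
  - move=> k kS; rewrite mxE big1 // => i /eqP ik.
    by move: kS; rewrite -ik enum_valP.
case=> w [w0 Aw0 wS]; exists (\col_i w (enum_val i) 0); split.
  by move=> i j; rewrite mxE.
move=> i j; rewrite (ord1 j); have := Aw0 i 0; rewrite !mxE.
rewrite (bigID (mem S)) /= [X in _ + X]big1 ?addr0; last first.
  by move=> k /wS ->; rewrite mulr0.
rewrite (big_enum_val (fun k => A i k * w k 0)).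
by under eq_bigr do rewrite !mxE.
Qed.

Lemma min_semipositive_witness_pos m n (A : 'M[R]_(m, n)) (x : 'cV[R]_n) :
  min_semipositive A -> mx_nonneg x -> mx_pos (A *m x) -> forall k, 0 < x k 0.
Proof.
move=> [_ Amin] x0 Ax0 k; rewrite lt_neqAle x0 andbT; apply/eqP => xk0.
apply: (Amin [set k' | x k' 0 != 0]).
  by apply/eqP => /setP /(_ k); rewrite !inE -xk0 eqxx.
by apply/semipositive_col_submxP; exists x; split => // k'; rewrite inE negbK => /eqP.
Qed.

(* The step length is the minimum of [x_l / -d_l] over the negative entries of [d]. *)
Lemma ray_hits_orthant_boundary n (x d : 'cV[R]_n) :
  (forall i, 0 < x i 0) -> (exists k, d k 0 < 0) ->
  exists2 t, 0 <= t & mx_nonneg (x + t *: d) /\ exists k, (x + t *: d) k 0 = 0.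
Proof.
move=> x0 [k0 dk0]; pose f l := x l 0 / - d l 0.
case: (@arg_minP _ _ _ k0 (fun l => d l 0 < 0) f dk0) => l dl fl_min.
have ndl : 0 < - d l 0 by rewrite oppr_gt0.
have fl0 : 0 <= f l by rewrite divr_ge0 // ltW.
exists (f l) => //.
split; last by exists l; rewrite !mxE /f invrN mulrN mulNr divfK ?subrr // -oppr_eq0 gt_eqF.
move=> i j; rewrite (ord1 j) !mxE.
have [di|di] := ltP (d i 0) 0; last by apply: addr_ge0; [exact: ltW | exact: mulr_ge0].
have := fl_min i di; rewrite {2}/f ler_pdivlMr ?oppr_gt0 // => fi.
by rewrite -(opprK (d i 0)) mulrN subr_ge0.
Qed.

Lemma min_semipositive_ray_exit n (A : 'M[R]_n) (x d : 'cV[R]_n) :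
  min_semipositive A -> mx_nonneg x -> mx_pos (A *m x) -> (exists k, d k 0 < 0) ->
  ~ (forall t, 0 <= t -> mx_pos (A *m (x + t *: d))).
Proof.
move=> Amin x0 Ax0 dneg Ad0.
have [t t0 [xd0 [k xdk]]] := ray_hits_orthant_boundary
  (min_semipositive_witness_pos Amin x0 Ax0) dneg.
by have := min_semipositive_witness_pos Amin xd0 (Ad0 t t0) k; rewrite xdk ltxx.
Qed.

Lemma min_semipositive_unitmx n (A : 'M[R]_n) : min_semipositive A -> A \in unitmx.
Proof.
move=> Amin; have [[x [x0 Ax0]] _] := Amin.
apply/negPn/negP; rewrite unitmxE unitfE negbK -det_tr => /det0P[v v0 vA0].
have Az0 : A *m v^T = 0 by rewrite -[A]trmxK -trmx_mul vA0 trmx0.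
have ray_pos z : A *m z = 0 -> forall t, 0 <= t -> mx_pos (A *m (x + t *: z)).
  by move=> Az t _; rewrite mulmxDr -scalemxAr Az scaler0 addr0.
have /cV0Pn[j vj0] : v^T != 0 by rewrite trmx_eq0.
have [vj|vj|/eqP] := ltgtP (v^T j 0) 0; last by rewrite (negPf vj0).
  by apply: (min_semipositive_ray_exit Amin x0 Ax0 _ (ray_pos _ Az0)); exists j.
apply: (min_semipositive_ray_exit Amin x0 Ax0 _ (ray_pos (- v^T) _)).
  by exists j; rewrite mxE oppr_lt0.
by rewrite mulmxN Az0 oppr0.
Qed.

(* A column of [A^-1] is a direction along which [A] only adds a unit vector. *)
Lemma min_semipositive_inv_nonneg n (A : 'M[R]_n) :
  min_semipositive A -> inv_nonneg A.
Proof.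
move=> Amin; have Au := min_semipositive_unitmx Amin; split => // k j.
have [[x [x0 Ax0]] _] := Amin; rewrite leNgt; apply/negP => Akj.
apply: (min_semipositive_ray_exit Amin x0 Ax0 (d := col j (invmx A))).
  by exists k; rewrite mxE.
move=> t t0 r c; rewrite (ord1 c) mulmxDr -scalemxAr colE mulmxA mulmxV //.
rewrite mul1mx !mxE; have := Ax0 r 0.
by rewrite mxE; have := mulr_ge0 t0 (ler0n R ((r == j) && true)); lra.
Qed.

Lemma inv_nonneg_min_semipositive n (A : 'M[R]_n) :
  inv_nonneg A -> min_semipositive A.
Proof.
move=> [Au A'0]; split.
  exists (invmx A *m const_mx 1); split.
    by apply: mx_nonneg_mul => // i j; rewrite mxE.
  by move=> i j; rewrite mulKVmx // mxE ltr01.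
move=> S; rewrite -properT => /properP[_ [k _ kS]].
move=> /semipositive_col_submxP[w [w0 Aw0 wS]].
have [j Akj] : exists j, invmx A k j != 0 by apply: unitmx_row_neq0; rewrite unitmx_inv.
have /eqP := wS k kS; apply/negP; rewrite gt_eqF //.
rewrite -(mulKmx Au w) mxE (bigD1 j) //= ltr_pwDl ?sumr_ge0 // => [|i _].
  by rewrite mulr_gt0 // lt_neqAle eq_sym Akj A'0.
by rewrite mulr_ge0 // ltW.
Qed.

Lemma min_semipositiveE n (A : 'M[R]_n) : min_semipositive A <-> inv_nonneg A.
Proof.
by split; [apply: min_semipositive_inv_nonneg | apply: inv_nonneg_min_semipositive].
Qed.

Lemma invmxM n (P Q : 'M[R]_n) : P \in unitmx -> Q \in unitmx ->
  invmx (P *m Q) = invmx Q *m invmx P.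
Proof.
move=> Pu Qu; have PQu : P *m Q \in unitmx by rewrite unitmx_mul Pu Qu.
rewrite -[RHS](mulKmx PQu) -mulmxA [Q *m _]mulmxA mulmxV //.
by rewrite mul1mx mulmxV // mulmx1.
Qed.

Lemma invmxN n (P : 'M[R]_n) : invmx (- P) = - invmx P.
Proof.
have N1u : (-1 : R) \is a GRing.unit by rewrite unitrN unitr1.
case Pu: (P \in unitmx); last by rewrite /invmx -scaleN1r unitmxZ // Pu scaleN1r.
by rewrite -scaleN1r invmxZ ?unitmxZ // invrN1 scaleN1r.
Qed.

Lemma inv_nonnegN n (P : 'M[R]_n) :
  inv_nonneg (- P) <-> P \in unitmx /\ mx_nonneg (- invmx P).
Proof.
have N1u : (-1 : R) \is a GRing.unit by rewrite unitrN unitr1.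
by rewrite /inv_nonneg invmxN -scaleN1r unitmxZ.
Qed.

Lemma inv_nonneg_mul n (P Q : 'M[R]_n) :
  inv_nonneg P -> inv_nonneg Q -> inv_nonneg (P *m Q).
Proof.
move=> [Pu P'0] [Qu Q'0]; split; first by rewrite unitmx_mul Pu Qu.
by rewrite invmxM //; apply: mx_nonneg_mul.
Qed.

Lemma slope_ge0 (p q : R) : (forall t, 0 < t -> 0 <= p + t * q) -> 0 <= q.
Proof.
move=> pq0; rewrite leNgt; apply/negP => q_lt0.
have t0 : 0 < (`|p| + 1) / - q by rewrite divr_gt0 ?oppr_gt0 // ltr_wpDl.
have := pq0 _ t0; have -> : (`|p| + 1) / - q * q = - (`|p| + 1).
  by field; rewrite lt_eqF.
by have := ler_norm p; lra.
Qed.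

(* Sherman-Morrison: [E_bc^2 = [c == b] E_bc], so [1 - s E_bc] is an inverse. *)
Lemma unitmx_1_add_delta n (b c : 'I_n) (t : R) :
  0 <= t -> 1%:M + t *: delta_mx b c \in unitmx.
Proof.
move=> t0; pose s := t / (1 + t * (c == b)%:R).
suff /mulmx1_unit[] : (1%:M + t *: delta_mx b c) *m (1%:M - s *: delta_mx b c) = 1%:M
  by [].
rewrite mulmxDl mul1mx mulmxBr mulmx1 -scalemxAl -scalemxAr.
rewrite mul_delta_mx_cond -scaler_nat !scalerA -scalerBl -scaleNr -addrA -scalerDl.
suff -> : - s + (t - t * (s * (c == b)%:R)) = 0 by rewrite scale0r addr0.
rewrite /s; field; apply: lt0r_neq0.
by have := mulr_ge0 t0 (ler0n R (c == b)); lra.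
Qed.

Lemma unitmx_prod_ge0_same_sign n (P Q : 'M[R]_n) :
  P \in unitmx -> Q \in unitmx -> (forall a b c d, 0 <= P a b * Q c d) ->
  (mx_nonneg P /\ mx_nonneg Q) \/ (mx_nonneg (- P) /\ mx_nonneg (- Q)).
Proof.
move=> Pu Qu PQ0.
case/boolP: [forall c, forall d, 0 <= Q c d] => [/forallP Q0 | ].
  have {}Q0 c d : 0 <= Q c d by move/forallP: (Q0 c).
  left; split => // a b; have [d Qad] := unitmx_row_neq0 a Qu.
  by rewrite -(pmulr_lge0 _ (_ : 0 < Q a d)) ?PQ0 // lt_neqAle eq_sym Qad Q0.
rewrite negb_forall => /existsP[c]; rewrite negb_forall => /existsP[d].
rewrite -ltNge => Qcd; right.
have P0 a b : P a b <= 0 by rewrite -(nmulr_lge0 _ Qcd) PQ0.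
split => a b; rewrite mxE oppr_ge0 //.
have [b' Pab'] := unitmx_row_neq0 a Pu.
by rewrite -(nmulr_rge0 _ (_ : P a b' < 0)) ?PQ0 // lt_neqAle Pab' P0.
Qed.

Section InverseNonnegativePreserver.
Variables (n : nat) (X Y : 'M[R]_n).
Hypothesis preserves : forall A, inv_nonneg A -> inv_nonneg (X *m A *m Y).

Lemma preserver_unitmx : X \in unitmx /\ Y \in unitmx.
Proof.
have I0 : inv_nonneg (1%:M : 'M[R]_n).
  by split; rewrite ?unitmx1 // invmx1 => i j; rewrite mxE ler0n.
by have [] := preserves I0; rewrite mulmx1 unitmx_mul => /andP.
Qed.

Lemma preserver_inv_conj_nonneg (B : 'M[R]_n) :
  B \in unitmx -> mx_nonneg B -> mx_nonneg (invmx Y *m B *m invmx X).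
Proof.
move=> Bu B0; have [Xu Yu] := preserver_unitmx.
have B'0 : inv_nonneg (invmx B) by split; rewrite ?unitmx_inv ?invmxK.
have [_] := preserves B'0.
by rewrite invmxM ?invmxM ?unitmx_mul ?Xu ?unitmx_inv // invmxK mulmxA.
Qed.

Lemma preserver_inv_prod_ge0 a b c d : 0 <= invmx Y a b * invmx X c d.
Proof.
apply: (@slope_ge0 ((invmx Y *m invmx X) a d)) => t t_gt0.
have := preserver_inv_conj_nonneg (unitmx_1_add_delta b c (ltW t_gt0)) _ a d.
rewrite mulmxDr mulmx1 mulmxDl -!scalemxAr -scalemxAl.
have -> : invmx Y *m delta_mx b c *m invmx X = col b (invmx Y) *m row c (invmx X).
  by rewrite colE rowE -(mul_delta_mx (0 : 'I_1) b c) !mulmxA.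
rewrite !mxE big_ord1 !mxE; apply => i j; rewrite !mxE.
by rewrite addr_ge0 ?ler0n ?mulr_ge0 ?ler0n ?ltW.
Qed.

End InverseNonnegativePreserver.
End MinimallySemipositive.

Theorem mainTheorem6 (R : realFieldType) (n : nat) (X Y : 'M[R]_n) :
  (forall A : 'M[R]_n, min_semipositive A -> min_semipositive (X *m A *m Y))
  <-> (inv_nonneg X /\ inv_nonneg Y) \/ (inv_nonneg (- X) /\ inv_nonneg (- Y)).
Proof.
split=> [H | XY A /min_semipositiveE A0].
  have {}H A : inv_nonneg A -> inv_nonneg (X *m A *m Y).
    by move=> /min_semipositiveE /H /min_semipositiveE.
  have [Xu Yu] := preserver_unitmx H.
  have [[Y0 X0] | [Y0 X0]] := unitmx_prod_ge0_same_sign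
    (etrans (unitmx_inv Y) Yu) (etrans (unitmx_inv X) Xu) (preserver_inv_prod_ge0 H).
  - by left.
  - by right; rewrite !inv_nonnegN.
apply/min_semipositiveE; case: XY => [[X0 Y0] | [X0 Y0]].
  exact: inv_nonneg_mul (inv_nonneg_mul X0 A0) Y0.
have -> : X *m A *m Y = - X *m A *m - Y by rewrite mulmxN !mulNmx opprK.
exact: inv_nonneg_mul (inv_nonneg_mul X0 A0) Y0.
Qed.
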